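(* Let $G$ be a topological group which is a Baire space. Then the following are equivalent: (i) $G$ is metrizable; (ii) $G$ has the strong Pytkeev property; (iii) $G$ has countable $ck$-character; (iv) $G$ has countable $cn$-character; (v) $G$ has a $\mathfrak{G}$-base satisfying the condition $(\mathbf{D})$.
   Context: A space $X$ has the strong Pytkeev property if for each $x\in X$ there is a countable family $\mathcal{D}$ of subsets of $X$ such that for each neighborhood $U$ of $x$ and each $A\subseteq X$ with $x\in\overline{A}\setminus A$ there is $D\in\mathcal{D}$ with $D\subseteq U$ and $D\cap A$ infinite. For $x\in X$, a family $\mathcal{N}$ of subsets of $X$ is a $cn$-network at $x$ if for each neighborhood $O_x$ of $x$ the set $\bigcup\{N\in\mathcal{N}:x\in N\subseteq O_x\}$ is a neighborhood of $x$; it is a $ck$-network at $x$ if for every neighborhood $O_x$ there is a neighborhood $U_x$ of $x$ such that for each compact $K\subseteq U_x$ there is a finite $\mathcal{F}\subseteq\mathcal{N}$ with $x\in\bigcap\mathcal{F}$ and $K\subseteq\bigcup\mathcal{F}\subseteq O_x$. The $cn$-character (resp. $ck$-character) of $X$ is the supremum over $x\in X$ of the least cardinality of a $cn$-network (resp. $ck$-network) at $x$. $\mathbb{N}^\mathbb{N}$ is ordered coordinatewise. A $\mathfrak{G}$-base of a topological group $G$ is a base $\{U_\alpha:\alpha\in\mathbb{N}^\mathbb{N}\}$ of neighborhoods of the unit $e$ with $U_\beta\subseteq U_\alpha$ whenever $\alpha\le\beta$. For $\alpha\in\mathbb{N}^\mathbb{N}$, $k\in\mathbb{N}$, let $I_k(\alpha)=\{\beta:\beta_i=\alpha_i,\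 i=1,\dots,k\}$ and $D_k(\alpha)=\bigcap_{\beta\in I_k(\alpha)}U_\beta$; the base satisfies condition $(\mathbf{D})$ if $U_\alpha=\bigcup_k D_k(\alpha)$ for every $\alpha$. *)

From Stdlib Require Import Reals List Classical.
Open Scope R_scope.
Set Implicit Arguments.

Section Topology.
Variable X : Type.
Variable opn : (X -> Prop) -> Prop.

Definition subset (A B : X -> Prop) : Prop := forall x, A x -> B x.

Definition is_topology : Prop :=
  opn (fun _ => True) /\
  (forall U V, opn U -> opn V -> opn (fun x => U x /\ V x)) /\
  (forall F : (X -> Prop) -> Prop, (forall U, F U -> opn U) ->
      opn (fun x => exists U, F U /\ U x)).

Definition hausdorff : Prop :=
  forall x y, x <> y -> exists U V, opn U /\ opn V /\ U x /\ V y /\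
     (forall z, U z -> V z -> False).

Definition nbhd (x : X) (N : X -> Prop) : Prop :=
  exists U, opn U /\ U x /\ subset U N.

Definition closure (A : X -> Prop) (x : X) : Prop :=
  forall U, opn U -> U x -> exists y, U y /\ A y.

Definition dense (A : X -> Prop) : Prop := forall x, closure A x.

Definition baire_space : Prop :=
  forall U : nat -> (X -> Prop), (forall n, opn (U n)) -> (forall n, dense (U n)) ->
    dense (fun x => forall n, U n x).

Definition infinite_set (A : X -> Prop) : Prop :=
  ~ exists l : list X, forall x, A x -> In x l.

Definition compact (K : X -> Prop) : Prop :=
  forall F : (X -> Prop) -> Prop, (forall U, F U -> opn U) ->
    subset K (fun x => exists U, F U /\ U x) ->
    exists l : list (X -> Prop), (forall U, In U l -> F U) /\
      subset K (fun x => exists U, In U l /\ U x).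

Definition countable_family (F : (X -> Prop) -> Prop) : Prop :=
  exists f : nat -> (X -> Prop), forall S, F S -> exists n, f n = S.

Definition metrizable : Prop :=
  exists d : X -> X -> R,
    (forall x y, 0 <= d x y) /\
    (forall x y, d x y = 0 <-> x = y) /\
    (forall x y, d x y = d y x) /\
    (forall x y z, d x z <= d x y + d y z) /\
    (forall U, opn U <-> (forall x, U x -> exists eps, eps > 0 /\
                               forall y, d x y < eps -> U y)).

Definition strong_pytkeev : Prop :=
  forall x, exists D : (X -> Prop) -> Prop, countable_family D /\
    forall U A, nbhd x U -> closure A x -> ~ A x ->
      exists S, D S /\ subset S U /\ infinite_set (fun y => S y /\ A y).

Definition cn_network_at (x : X) (N : (X -> Prop) -> Prop) : Prop :=
  forall O, nbhd x O ->
    nbhd x (fun y => exists S, N S /\ S x /\ subset S O /\ S y).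

Definition ck_network_at (x : X) (N : (X -> Prop) -> Prop) : Prop :=
  forall O, nbhd x O -> exists U, nbhd x U /\
    forall K, compact K -> subset K U ->
      exists Fl : list (X -> Prop), (forall S, In S Fl -> N S) /\
        (forall S, In S Fl -> S x) /\
        subset K (fun y => exists S, In S Fl /\ S y) /\
        subset (fun y => exists S, In S Fl /\ S y) O.

Definition countable_cn_character : Prop :=
  forall x, exists N, countable_family N /\ cn_network_at x N.

Definition countable_ck_character : Prop :=
  forall x, exists N, countable_family N /\ ck_network_at x N.

End Topology.

Section Groups.
Variable G : Type.
Variable opn : (G -> Prop) -> Prop.
Variable mul : G -> G -> G.
Variable inv : G -> G.
Variable e : G.

Definition is_group : Prop :=
  (forall x y z, mul x (mul y z) = mul (mul x y) z) /\
  (forall x, mul e x = x /\ mul x e = x) /\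
  (forall x, mul x (inv x) = e /\ mul (inv x) x = e).

Definition is_topological_group : Prop :=
  @is_topology G opn /\ is_group /\
  (forall x y W, opn W -> W (mul x y) ->
     exists U V, opn U /\ opn V /\ U x /\ V y /\
       forall a b, U a -> V b -> W (mul a b)) /\
  (forall x W, opn W -> W (inv x) ->
     exists U, opn U /\ U x /\ forall a, U a -> W (inv a)).

(* N^N ordered coordinatewise; indices are shifted to start at 0 *)
Definition le_seq (a b : nat -> nat) : Prop := forall i, (a i <= b i)%nat.

Definition is_G_base (U : (nat -> nat) -> (G -> Prop)) : Prop :=
  (forall a, @nbhd G opn e (U a)) /\
  (forall O, @nbhd G opn e O -> exists a, @subset G (U a) O) /\
  (forall a b, le_seq a b -> @subset G (U b) (U a)).

Definition D_set (U : (nat -> nat) -> (G -> Prop)) (k : nat) (a : nat -> nat) : G -> Prop :=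
  fun g => forall b, (forall i, (i < k)%nat -> b i = a i) -> U b g.

Definition condition_D (U : (nat -> nat) -> (G -> Prop)) : Prop :=
  forall a g, U a g <-> exists k, (1 <= k)%nat /\ D_set U k a g.

Definition has_G_base_D : Prop :=
  exists U, is_G_base U /\ condition_D U.

End Groups.

(* A metric space has countable networks of dyadic balls, which witness the strong Pytkeev
   property and countable ck- and cn-character, and the balls around the unit form a G-base
   with (D). Conversely, each of (ii)-(v) yields a countable cn-network at the unit. In a Baire
   group such a network gives a countable base at the unit: the members lying in a small
   symmetric neighbourhood W cover a neighbourhood of e, so by Baire category one of them, F,
   has a closure with interior, and then cl(F)^-1 cl(F) is a neighbourhood of e inside W^4.
   Finally a Hausdorff group with a countable base at e is metrizable (Birkhoff–Kakutani):
   choosing symmetric V_n with V_(n+1)^3 ⊆ V_n, the distance d(x, y) is the infimum of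
   Σ 2^-k_i over the factorizations x^-1 y = g_1 ⋯ g_r with g_i ∈ V_(k_i). *)

From Pilot Require Import Defs.
From Stdlib Require Import Reals List Classical Lra Lia Cantor.
From Stdlib Require Import FunctionalExtensionality PropExtensionality ClassicalEpsilon.
Set Implicit Arguments.
Unset Strict Implicit.
Open Scope R_scope.

Lemma half_pow_pos n : 0 < (/2)^n.
Proof. apply pow_lt; lra. Qed.

Lemma half_pow_S n : (/2)^(S n) + (/2)^(S n) = (/2)^n.
Proof. simpl; lra. Qed.

Lemma half_pow_le m n : (m <= n)%nat -> (/2)^n <= (/2)^m.
Proof.
  induction 1 as [|n _ IH]; [lra|].
  pose proof (half_pow_pos n). simpl in *. lra.
Qed.

Lemma half_pow_le_inv m n : (/2)^m <= (/2)^n -> (n <= m)%nat.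
Proof.
  intro H. destruct (Nat.le_gt_cases n m) as [|Hlt]; [assumption|exfalso].
  pose proof (half_pow_le Hlt). pose proof (half_pow_pos m). simpl in *. lra.
Qed.

Lemma half_pow_lt eps : 0 < eps -> exists n, (/2)^n < eps.
Proof.
  intro Heps. destruct (pow_lt_1_zero (/2) ltac:(rewrite Rabs_pos_eq; lra) eps Heps) as [n Hn].
  exists n. specialize (Hn n (le_n n)). rewrite Rabs_pos_eq in Hn; [assumption|].
  apply Rlt_le, half_pow_pos.
Qed.

Section GroupLaws.
Variables (G : Type) (mul : G -> G -> G) (inv : G -> G) (e : G).
Hypothesis HG : is_group mul inv e.

Lemma mulgA x y z : mul x (mul y z) = mul (mul x y) z. Proof. apply HG. Qed.
Lemma mul1g x : mul e x = x. Proof. apply HG. Qed.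
Lemma mulg1 x : mul x e = x. Proof. apply HG. Qed.
Lemma mulgV x : mul x (inv x) = e. Proof. apply HG. Qed.
Lemma mulVg x : mul (inv x) x = e. Proof. apply HG. Qed.

Lemma mulKg x y : mul (inv x) (mul x y) = y.
Proof. rewrite mulgA, mulVg; apply mul1g. Qed.

Lemma mulKVg x y : mul x (mul (inv x) y) = y.
Proof. rewrite mulgA, mulgV; apply mul1g. Qed.

Lemma invg_unique x y : mul x y = e -> inv x = y.
Proof. intro H. rewrite <- (mulg1 (inv x)), <- H. apply mulKg. Qed.

Lemma invg1 : inv e = e.
Proof. apply invg_unique, mul1g. Qed.

Lemma invgK x : inv (inv x) = x.
Proof. apply invg_unique, mulVg. Qed.

Lemma invMg x y : inv (mul x y) = mul (inv y) (inv x).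
Proof. apply invg_unique. rewrite <- mulgA, mulKVg. apply mulgV. Qed.

Definition symmetric_set (W : G -> Prop) : Prop := forall a, W a -> W (inv a).

End GroupLaws.

Section ChainMetric.
Variables (G : Type) (mul : G -> G -> G) (inv : G -> G) (e : G).
Hypothesis HG : is_group mul inv e.
Variable V : nat -> G -> Prop.
Hypothesis V0_full : forall a, V 0%nat a.
Hypothesis V_e : forall n, V n e.
Hypothesis V_symm : forall n, symmetric_set inv (V n).
Hypothesis V_cube : forall n a b c,
  V (S n) a -> V (S n) b -> V (S n) c -> V n (mul a (mul b c)).

Lemma V_succ n a : V (S n) a -> V n a.
Proof.
  intro Ha. pose proof (V_cube (V_e (S n)) Ha (V_e (S n))) as H.
  rewrite (mulg1 HG), (mul1g HG) in H. exact H.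
Qed.

Lemma V_antitone m n a : (m <= n)%nat -> V n a -> V m a.
Proof. induction 1; auto using V_succ. Qed.

(* A chain is a factorization g_1 ⋯ g_r with each factor tagged by a level k, g ∈ V k;
   a factor of level k costs 2^-k. *)
Fixpoint weight (l : list (nat * G)) : R :=
  match l with nil => 0 | (k, _) :: t => (/2)^k + weight t end.

Fixpoint chain_prod (l : list (nat * G)) : G :=
  match l with nil => e | (_, g) :: t => mul g (chain_prod t) end.

Fixpoint admissible (l : list (nat * G)) : Prop :=
  match l with nil => True | (k, g) :: t => V k g /\ admissible t end.

Fixpoint chain_inv (l : list (nat * G)) : list (nat * G) :=
  match l with nil => nil | (k, g) :: t => chain_inv t ++ (k, inv g) :: nil end.

Lemma weight_ge0 l : 0 <= weight l.
Proof. induction l as [|[k g] t IH]; simpl; [lra|]. pose proof (half_pow_pos k); lra. Qed.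

Lemma weight_le0 l : weight l <= 0 -> l = nil.
Proof.
  destruct l as [|[k g] t]; [reflexivity|simpl; intro].
  pose proof (half_pow_pos k). pose proof (weight_ge0 t). lra.
Qed.

Lemma weight_app l1 l2 : weight (l1 ++ l2) = weight l1 + weight l2.
Proof. induction l1 as [|[k g] t IH]; simpl; [lra|]. rewrite IH; lra. Qed.

Lemma chain_prod_app l1 l2 : chain_prod (l1 ++ l2) = mul (chain_prod l1) (chain_prod l2).
Proof.
  induction l1 as [|[k g] t IH]; simpl; [symmetry; apply (mul1g HG)|].
  rewrite IH; apply (mulgA HG).
Qed.

Lemma admissible_app l1 l2 : admissible (l1 ++ l2) <-> admissible l1 /\ admissible l2.
Proof. induction l1 as [|[k g] t IH]; simpl; tauto. Qed.

Lemma chain_inv_spec l :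
  weight (chain_inv l) = weight l /\ chain_prod (chain_inv l) = inv (chain_prod l) /\
  (admissible l -> admissible (chain_inv l)).
Proof.
  induction l as [|[k g] t [IHw [IHp IHa]]]; simpl.
  - rewrite (invg1 HG). tauto.
  - rewrite weight_app, chain_prod_app, admissible_app, IHw, IHp; simpl.
    rewrite (mulg1 HG), (invMg HG). split; [lra|split; [reflexivity|]].
    intros [Hg Ht]. split; auto. split; [apply V_symm|]; auto.
Qed.

Lemma weight_prefix_split l t : 0 <= t -> t < weight l ->
  exists A k g B, l = A ++ (k, g) :: B /\ weight A <= t /\ t < weight A + (/2)^k.
Proof.
  revert t. induction l as [|[k g] l IH]; intros t Ht Hl; simpl in Hl; [lra|].
  destruct (Rlt_le_dec t ((/2)^k)) as [Hk|Hk].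
  - exists nil, k, g, l. simpl. split; [reflexivity|lra].
  - destruct (IH (t - (/2)^k)) as [A [k' [g' [B [-> [H1 H2]]]]]]; try lra.
    exists ((k, g) :: A), k', g', B. simpl. split; [reflexivity|lra].
Qed.

(* Split at the factor where the running weight first exceeds 2^-(n+1). *)
Lemma chain_split l n : l <> nil -> weight l <= (/2)^n ->
  (exists g, l = (n, g) :: nil) \/
  exists A k g B, l = A ++ (k, g) :: B /\ (S n <= k)%nat /\
    weight A <= (/2)^(S n) /\ weight B <= (/2)^(S n).
Proof.
  intros Hne Hl. pose proof (half_pow_S n). pose proof (half_pow_pos (S n)) as Hpos.
  destruct (Rle_lt_dec (weight l) ((/2)^(S n))) as [Hsmall|Hbig].
  - destruct l as [|[k g] t]; [contradiction|right]. simpl in Hsmall.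
    pose proof (weight_ge0 t). pose proof (half_pow_pos k).
    exists nil, k, g, t. simpl. repeat split; try lra.
    apply half_pow_le_inv; lra.
  - destruct (weight_prefix_split (Rlt_le _ _ Hpos) Hbig) as [A [k [g [B [El [HA Hk]]]]]].
    assert (Hw : weight l = weight A + (/2)^k + weight B) by (rewrite El, weight_app; simpl; lra).
    pose proof (weight_ge0 A). pose proof (weight_ge0 B).
    assert (Hnk : (n <= k)%nat) by (apply half_pow_le_inv; lra).
    destruct (Nat.eq_dec k n) as [->|Hkn].
    + left. exists g. rewrite El, (@weight_le0 A), (@weight_le0 B); try lra. reflexivity.
    + right. exists A, k, g, B. split; [exact El|]. repeat split; try lra. lia.
Qed.

Lemma chain_prod_mem l n : admissible l -> weight l <= (/2)^n -> V n (chain_prod l).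
Proof.
  revert n. induction l as [l IH] using (well_founded_ind (Wf_nat.well_founded_ltof _ (@length _))).
  intros n Hadm Hl. destruct l as [|x t]; [apply V_e|].
  destruct (chain_split (l := x :: t) ltac:(discriminate) Hl) as [[g E]|[A [k [g [B [E [Hk [HA HB]]]]]]]];
    rewrite E in Hadm |- *.
  - simpl in *. rewrite (mulg1 HG). apply Hadm.
  - assert (Hlen : forall C, C = A \/ C = B -> Wf_nat.ltof _ (@length _) C (x :: t)).
    { intros C HC. unfold Wf_nat.ltof. rewrite E, length_app. simpl. destruct HC; subst; lia. }
    apply admissible_app in Hadm. destruct Hadm as [HadA [Hg HadB]].
    rewrite chain_prod_app. simpl.
    apply V_cube; [apply IH| apply (V_antitone Hk) |apply IH]; auto.
Qed.

Definition chain_weights (x y : G) (r : R) : Prop :=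
  exists l, admissible l /\ chain_prod l = mul (inv x) y /\ r = - weight l.

Lemma chain_weights_bound x y : bound (chain_weights x y).
Proof. exists 0. intros r [l [_ [_ ->]]]. pose proof (weight_ge0 l). lra. Qed.

Lemma chain_weights_inhabited x y : exists r, chain_weights x y r.
Proof.
  exists (- weight ((0%nat, mul (inv x) y) :: nil)), ((0%nat, mul (inv x) y) :: nil).
  simpl. rewrite (mulg1 HG). auto.
Qed.

(* The infimum of the weights of the chains from [x] to [y]. *)
Definition chain_dist (x y : G) : R :=
  - proj1_sig (completeness _ (chain_weights_bound x y) (chain_weights_inhabited x y)).

Lemma chain_dist_lub x y : is_lub (chain_weights x y) (- chain_dist x y).
Proof.
  unfold chain_dist. destruct completeness as [m Hm]. simpl. rewrite Ropp_involutive. exact Hm.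
Qed.

Lemma chain_dist_le x y l :
  admissible l -> chain_prod l = mul (inv x) y -> chain_dist x y <= weight l.
Proof.
  intros Hadm Hl. destruct (chain_dist_lub x y) as [Hub _].
  assert (- weight l <= - chain_dist x y) by (apply Hub; exists l; auto). lra.
Qed.

Lemma chain_dist_ge0 x y : 0 <= chain_dist x y.
Proof.
  destruct (chain_dist_lub x y) as [_ Hleast].
  enough (- chain_dist x y <= 0) by lra.
  apply Hleast. intros r [l [_ [_ ->]]]. pose proof (weight_ge0 l). lra.
Qed.

Lemma chain_dist_approx x y eps : chain_dist x y < eps ->
  exists l, admissible l /\ chain_prod l = mul (inv x) y /\ weight l < eps.
Proof.
  intro H. apply NNPP. intro Hno. destruct (chain_dist_lub x y) as [_ Hleast].
  enough (- chain_dist x y <= - eps) by lra.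
  apply Hleast. intros r [l [Hadm [Hl ->]]].
  destruct (Rle_lt_dec eps (weight l)); [lra|]. exfalso. eauto.
Qed.

Lemma chain_dist_refl x : chain_dist x x = 0.
Proof.
  apply Rle_antisym; [|apply chain_dist_ge0].
  apply (chain_dist_le (l := nil)); simpl; [exact I|symmetry; apply (mulVg HG)].
Qed.

Lemma chain_dist_sym_le x y : chain_dist x y <= chain_dist y x.
Proof.
  apply Rnot_lt_le. intro Hlt.
  destruct (chain_dist_approx Hlt) as [l [Hadm [Hl Hw]]].
  destruct (chain_inv_spec l) as [Ew [Ep Ea]].
  enough (chain_dist x y <= weight (chain_inv l)) by lra.
  apply chain_dist_le; auto.
  rewrite Ep, Hl, (invMg HG), (invgK HG). reflexivity.
Qed.

Lemma chain_dist_triangle x y z : chain_dist x z <= chain_dist x y + chain_dist y z.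
Proof.
  apply Rnot_lt_le. intro Hlt.
  set (gap := chain_dist x z - chain_dist x y - chain_dist y z).
  destruct (@chain_dist_approx x y (chain_dist x y + gap / 2)) as [l1 [Ha1 [Hp1 Hw1]]];
    [unfold gap; lra|].
  destruct (@chain_dist_approx y z (chain_dist y z + gap / 2)) as [l2 [Ha2 [Hp2 Hw2]]];
    [unfold gap; lra|].
  enough (chain_dist x z <= weight (l1 ++ l2)) by (rewrite weight_app in *; unfold gap in *; lra).
  apply chain_dist_le; [apply admissible_app; auto|].
  rewrite chain_prod_app, Hp1, Hp2, <- (mulgA HG), (mulKVg HG). reflexivity.
Qed.

Lemma exists_chain_metric : exists d : G -> G -> R,
  (forall x y, 0 <= d x y) /\ (forall x, d x x = 0) /\ (forall x y, d x y = d y x) /\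
  (forall x y z, d x z <= d x y + d y z) /\
  (forall x y n, d x y < (/2)^n -> V n (mul (inv x) y)) /\
  (forall x y n, V n (mul (inv x) y) -> d x y <= (/2)^n).
Proof.
  exists chain_dist. repeat split.
  - apply chain_dist_ge0.
  - apply chain_dist_refl.
  - intros x y. apply Rle_antisym; apply chain_dist_sym_le.
  - apply chain_dist_triangle.
  - intros x y n H. destruct (chain_dist_approx H) as [l [Hadm [Hl Hw]]].
    rewrite <- Hl. apply chain_prod_mem; [assumption|lra].
  - intros x y n H. eapply Rle_trans.
    + apply (chain_dist_le (l := (n, mul (inv x) y) :: nil)); simpl; [auto|apply (mulg1 HG)].
    + simpl. lra.
Qed.

End ChainMetric.

Section Topology.
Variables (X : Type) (opn : (X -> Prop) -> Prop).
Hypothesis Htop : is_topology opn.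

Lemma open_full : opn (fun _ => True). Proof. apply Htop. Qed.

Lemma open_of_locally_open S :
  (forall x, S x -> exists V, opn V /\ V x /\ subset V S) -> opn S.
Proof.
  intro H. destruct Htop as [_ [_ Hunion]].
  replace S with (fun x => exists U, (opn U /\ subset U S) /\ U x).
  - apply Hunion. intros U [HU _]. exact HU.
  - apply functional_extensionality. intro x. apply propositional_extensionality. split.
    + intros [U [[_ HUS] HUx]]. exact (HUS x HUx).
    + intro Sx. destruct (H x Sx) as [V [HV [Vx HVS]]]. exists V. auto.
Qed.

Lemma nbhd_of_open x U : opn U -> U x -> nbhd opn x U.
Proof. intros HU Ux. exists U. repeat split; auto. intros y Uy; exact Uy. Qed.

Lemma nbhd_mem x U : nbhd opn x U -> U x.
Proof. intros [W [_ [Wx WU]]]. exact (WU x Wx). Qed.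

Lemma nbhd_mono x U U' : nbhd opn x U -> subset U U' -> nbhd opn x U'.
Proof. intros [W [HW [Wx WU]]] HUU'. exists W. repeat split; auto. intros y Wy; auto. Qed.

Lemma nbhd_inter x U U' : nbhd opn x U -> nbhd opn x U' -> nbhd opn x (fun y => U y /\ U' y).
Proof.
  intros [W [HW [Wx WU]]] [W' [HW' [W'x WU']]].
  exists (fun y => W y /\ W' y). split; [apply Htop; auto|].
  split; [auto|]. intros y [Wy W'y]. auto.
Qed.

Lemma closure_mono A A' x : subset A A' -> closure opn A x -> closure opn A' x.
Proof. intros HA H U HU Ux. destruct (H U HU Ux) as [y [Uy Ay]]. eauto. Qed.

Lemma open_not_closure A : opn (fun x => ~ closure opn A x).
Proof.
  apply open_of_locally_open. intros x Hx.
  apply not_all_ex_not in Hx as [U HU]. apply imply_to_and in HU as [HUo HU].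
  apply imply_to_and in HU as [Ux HU].
  exists U. repeat split; auto. intros y Uy Hy.
  destruct (Hy U HUo Uy) as [z [Uz Az]]. eauto.
Qed.

Lemma hausdorff_nbhd_eq x y : hausdorff opn -> (forall U, nbhd opn x U -> U y) -> y = x.
Proof.
  intros Hsep Hy. apply NNPP. intro Hne.
  destruct (Hsep y x Hne) as [U [W [HU [HW [Uy [Wx Hdisj]]]]]].
  exact (Hdisj y Uy (Hy W (nbhd_of_open HW Wx))).
Qed.

Definition first_countable_at (x : X) : Prop :=
  exists B : nat -> X -> Prop, (forall n, nbhd opn x (B n)) /\
    forall O, nbhd opn x O -> exists n, subset (B n) O.

Lemma first_countable_at_intro x (B : nat -> X -> Prop) :
  (forall O, nbhd opn x O -> exists n, nbhd opn x (B n) /\ subset (B n) O) ->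
  first_countable_at x.
Proof.
  (* Members of [B] that are not neighbourhoods are replaced by the whole space. *)
  intro HB. exists (fun n y => nbhd opn x (B n) -> B n y). split.
  - intro n. destruct (classic (nbhd opn x (B n))) as [Hn|Hn].
    + apply (nbhd_mono Hn). intros y By _. exact By.
    + apply (nbhd_mono (nbhd_of_open (x := x) open_full I)). intros y _ Hn'. contradiction.
  - intros O HO. destruct (HB O HO) as [n [Hn HnO]]. exists n. intros y Hy. auto.
Qed.

Lemma baire_closure_interior (f : nat -> X -> Prop) (P : nat -> Prop) (Q : X -> Prop) y :
  baire_space opn -> opn Q -> Q y -> subset Q (fun z => exists n, P n /\ f n z) ->
  exists n W z, P n /\ opn W /\ W z /\ subset W (closure opn (f n)).
Proof.
  intros Hbaire HQ Qy Hcover. apply NNPP. intro Hno.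
  set (U n z := P n -> ~ closure opn (f n) z).
  assert (HU : forall n, opn (U n)).
  { intro n. destruct (classic (P n)) as [Pn|Pn].
    - replace (U n) with (fun z => ~ closure opn (f n) z); [apply open_not_closure|].
      apply functional_extensionality. intro z. apply propositional_extensionality.
      unfold U. tauto.
    - replace (U n) with (fun _ : X => True); [apply open_full|].
      apply functional_extensionality. intro z. apply propositional_extensionality.
      unfold U. tauto. }
  assert (HUdense : forall n, dense opn (U n)).
  { intros n x W HW Wx. apply NNPP. intro Hempty. apply Hno. exists n, W, x.
    repeat split; auto.
    - apply NNPP. intro Pn. apply Hempty. exists x. split; [exact Wx|]. intro; contradiction.
    - intros z Wz. apply NNPP. intro Hz. apply Hempty. exists z. split; [exact Wz|]. intros _; exact Hz. }
  destruct (Hbaire U HU HUdense y Q HQ Qy) as [z [Qz Uz]].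
  destruct (Hcover z Qz) as [n [Pn fz]].
  apply (Uz n Pn). intros W _ Wz. eauto.
Qed.

Lemma compact_singleton x : Defs.compact opn (fun y => y = x).
Proof.
  intros F _ Hcov. destruct (Hcov x eq_refl) as [U [FU Ux]].
  exists (U :: nil). split.
  - intros V [<-|[]]. exact FU.
  - intros y ->. exists U. split; [left|]; auto.
Qed.

Lemma cn_network_of_ck_network x N : ck_network_at opn x N -> cn_network_at opn x N.
Proof.
  intros Hck O HO. destruct (Hck O HO) as [U [HU HK]].
  apply (nbhd_mono HU). intros y Uy.
  destruct (HK (fun z => z = y) (compact_singleton (x := y))) as [Fl [HFN [HFx [Hcov HFO]]]].
  { intros z ->. exact Uy. }
  destruct (Hcov y eq_refl) as [S [HS Sy]].
  exists S. repeat split; [apply HFN | apply HFx | | ]; auto.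
  intros z Sz. apply HFO. eauto.
Qed.

Definition pytkeev_network_at (x : X) (D : (X -> Prop) -> Prop) : Prop :=
  forall U A, nbhd opn x U -> closure opn A x -> ~ A x ->
    exists S, D S /\ subset S U /\ infinite_set (fun y => S y /\ A y).

(* Adjoining [x] to each member (and adding [{x}]) turns a Pytkeev network into a cn-network. *)
Lemma countable_cn_of_pytkeev x D : countable_family D -> pytkeev_network_at x D ->
  exists N, countable_family N /\ cn_network_at opn x N.
Proof.
  intros [f Hf] HD.
  set (g n := match n with 0%nat => fun y => y = x | S m => fun y => y = x \/ f m y end).
  exists (fun S => exists n, g n = S). split; [exists g; auto|].
  intros O HO. set (H y := exists S, (exists n, g n = S) /\ S x /\ subset S O /\ S y).
  assert (Ox : O x) by (apply nbhd_mem; exact HO).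
  apply NNPP. intro Hnot.
  assert (Hx : H x).
  { exists (g 0%nat). split; [exists 0%nat; reflexivity|].
    split; [reflexivity|]. split; [intros y ->; exact Ox|reflexivity]. }
  destruct (HD O (fun y => ~ H y) HO) as [T [DT [TO Tinf]]].
  - intros W HW Wx. apply NNPP. intro Hno. apply Hnot. exists W. repeat split; auto.
    intros y Wy. apply NNPP. intro Hy. apply Hno. eauto.
  - tauto.
  - destruct (Hf T DT) as [m <-]. apply Tinf. exists nil. intros y [Ty Hy]. apply Hy.
    exists (g (S m)). split; [exists (S m); reflexivity|]. simpl.
    split; [left; reflexivity|]. split; [intros z [->|Tz]; auto|right; exact Ty].
Qed.

End Topology.

Section MetricSpace.
Variables (X : Type) (opn : (X -> Prop) -> Prop) (d : X -> X -> R).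
Hypothesis d_ge0 : forall x y, 0 <= d x y.
Hypothesis d_eq0 : forall x y, d x y = 0 <-> x = y.
Hypothesis d_triangle : forall x y z, d x z <= d x y + d y z.
Hypothesis d_open : forall U, opn U <->
  (forall x, U x -> exists eps, eps > 0 /\ forall y, d x y < eps -> U y).

Definition ball (x : X) (r : R) : X -> Prop := fun y => d x y < r.

Lemma ball_open x r : opn (ball x r).
Proof.
  apply d_open. intros y Hy. exists (r - d x y). unfold ball in *. split; [lra|].
  intros z Hz. pose proof (d_triangle x y z). lra.
Qed.

Lemma ball_center x r : 0 < r -> ball x r x.
Proof. intro Hr. unfold ball. rewrite (proj2 (d_eq0 x x) eq_refl). exact Hr. Qed.

Lemma ball_nbhd x r : 0 < r -> nbhd opn x (ball x r).
Proof.
  intro Hr. exists (ball x r). split; [apply ball_open|].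
  split; [apply ball_center; exact Hr|intros y Hy; exact Hy].
Qed.

Lemma nbhd_contains_ball x U : nbhd opn x U -> exists n, subset (ball x ((/2)^n)) U.
Proof.
  intros [W [HW [Wx WU]]]. destruct (proj1 (d_open W) HW x Wx) as [eps [Heps Hball]].
  destruct (half_pow_lt Heps) as [n Hn]. exists n.
  intros y Hy. apply WU, Hball. unfold ball in Hy. lra.
Qed.

Definition dyadic_balls (x : X) (S : X -> Prop) : Prop := exists n, ball x ((/2)^n) = S.

Lemma dyadic_balls_countable x : countable_family (dyadic_balls x).
Proof. exists (fun n => ball x ((/2)^n)). intros S [n <-]. eauto. Qed.

Lemma finite_set_dist_pos x (l : list X) :
  exists eps, 0 < eps /\ forall z, In z l -> z <> x -> eps <= d x z.
Proof.
  induction l as [|a l [eps [Heps H]]].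
  - exists 1. split; [lra|]. intros z [].
  - destruct (classic (a = x)) as [->|Hax].
    + exists eps. split; [exact Heps|]. intros z [<-|Hz] Hzx; [contradiction|auto].
    + assert (Hda : 0 < d x a).
      { destruct (d_ge0 x a) as [|Hda]; [assumption|].
        exfalso. apply Hax. symmetry. apply d_eq0. symmetry. exact Hda. }
      exists (Rmin eps (d x a)). split; [apply Rmin_pos; assumption|].
      intros z [<-|Hz] Hzx; [apply Rmin_r|].
      eapply Rle_trans; [apply Rmin_l|auto].
Qed.

Lemma metric_pytkeev_network x : pytkeev_network_at opn x (dyadic_balls x).
Proof.
  intros U A HU HA HAx. destruct (nbhd_contains_ball HU) as [n Hn].
  exists (ball x ((/2)^n)). split; [exists n; reflexivity|]. split; [exact Hn|].
  intros [l Hl]. destruct (finite_set_dist_pos x l) as [eps [Heps Hsep]].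
  pose proof (half_pow_pos n).
  destruct (HA (ball x (Rmin eps ((/2)^n)))) as [y [Hy Ay]].
  - apply ball_open.
  - apply ball_center, Rmin_pos; assumption.
  - unfold ball in Hy. pose proof (Rmin_l eps ((/2)^n)). pose proof (Rmin_r eps ((/2)^n)).
    assert (Hyl : In y l) by (apply Hl; split; [unfold ball|]; auto; lra).
    assert (Hyx : y <> x) by (intros ->; contradiction).
    pose proof (Hsep y Hyl Hyx). lra.
Qed.

Lemma metric_strong_pytkeev : strong_pytkeev opn.
Proof.
  intro x. exists (dyadic_balls x).
  split; [apply dyadic_balls_countable|apply metric_pytkeev_network].
Qed.

(* A single ball serves for every compact subset. *)
Lemma metric_ck_network x : ck_network_at opn x (dyadic_balls x).
Proof.
  intros O HO. destruct (nbhd_contains_ball HO) as [n Hn].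
  pose proof (half_pow_pos n).
  exists (ball x ((/2)^n)). split; [apply ball_nbhd; assumption|].
  intros K _ HK. exists (ball x ((/2)^n) :: nil). repeat split.
  - intros S [<-|[]]. exists n; reflexivity.
  - intros S [<-|[]]. apply ball_center; assumption.
  - intros y Ky. exists (ball x ((/2)^n)). split; [left; reflexivity|auto].
  - intros y [S [[<-|[]] Sy]]. auto.
Qed.

Lemma metric_countable_ck_character : countable_ck_character opn.
Proof.
  intro x. exists (dyadic_balls x).
  split; [apply dyadic_balls_countable|apply metric_ck_network].
Qed.

(* Only the first coordinate of the index is used, so condition (D) holds with k = 1. *)
Lemma metric_has_G_base_D (e : X) : has_G_base_D opn e.
Proof.
  exists (fun a => ball e ((/2)^(a 0%nat))). repeat split.
  - intro a. apply ball_nbhd, half_pow_pos.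
  - intros O HO. destruct (nbhd_contains_ball HO) as [n Hn]. exists (fun _ => n). exact Hn.
  - intros a b Hab g Hg. unfold ball in *. pose proof (half_pow_le (Hab 0%nat)). lra.
  - intro Hg. exists 1%nat. split; [lia|]. intros b Hb. rewrite (Hb 0%nat); [exact Hg|lia].
  - intros [k [Hk Hg]]. apply Hg. reflexivity.
Qed.

End MetricSpace.

Fixpoint nat_list_of (len n : nat) : list nat :=
  match len with
  | 0%nat => nil
  | S k => fst (Cantor.of_nat n) :: nat_list_of k (snd (Cantor.of_nat n))
  end.

Lemma nat_list_of_surj l : exists n, nat_list_of (length l) n = l.
Proof.
  induction l as [|h t [m Hm]]; [exists 0%nat; reflexivity|].
  exists (Cantor.to_nat (h, m)). cbn [nat_list_of length].
  rewrite Cantor.cancel_of_to. cbn [fst snd]. rewrite Hm. reflexivity.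
Qed.

Lemma list_nat_countable : exists f : nat -> list nat, forall l, exists n, f n = l.
Proof.
  exists (fun n => nat_list_of (fst (Cantor.of_nat n)) (snd (Cantor.of_nat n))).
  intro l. destruct (nat_list_of_surj l) as [m Hm].
  exists (Cantor.to_nat (length l, m)). rewrite Cantor.cancel_of_to. exact Hm.
Qed.

Section GBase.
Variables (G : Type) (opn : (G -> Prop) -> Prop) (e : G).

Lemma D_set_prefix (U : (nat -> nat) -> G -> Prop) k a b :
  (forall i, (i < k)%nat -> a i = b i) -> subset (D_set U k a) (D_set U k b).
Proof. intros Hab g Hg c Hc. apply Hg. intros i Hi. rewrite Hc, Hab; auto. Qed.

(* Since [D_set U k a] only depends on the first [k] coordinates of [a], the sets [D_k(a)]
   form a countable family, and condition (D) makes it a cn-network at the unit. *)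
Lemma cn_network_of_G_base_D : has_G_base_D opn e ->
  exists N, countable_family N /\ cn_network_at opn e N.
Proof.
  intros [U [[HUnbhd [HUbase _]] HD]].
  set (Dl (l : list nat) := D_set U (length l) (fun i => nth i l 0%nat)).
  exists (fun S => exists l, Dl l = S). split.
  - destruct list_nat_countable as [f Hf]. exists (fun n => Dl (f n)).
    intros S [l <-]. destruct (Hf l) as [n <-]. eauto.
  - intros O HO. destruct (HUbase O HO) as [a HaO].
    apply (nbhd_mono (HUnbhd a)). intros g Hg.
    destruct (proj1 (HD a g) Hg) as [k [_ Hk]].
    set (l := map a (List.seq 0 k)).
    assert (Hl : forall i, (i < k)%nat -> nth i l 0%nat = a i).
    { intros i Hi. unfold l. rewrite (nth_indep _ _ (a 0%nat)) by (rewrite length_map, length_seq; lia).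
      rewrite map_nth, seq_nth; auto. }
    assert (Hlen : length l = k) by (unfold l; rewrite length_map, length_seq; reflexivity).
    exists (Dl l). split; [exists l; reflexivity|]. unfold Dl. rewrite Hlen.
    split; [|split].
    + intros b _. exact (nbhd_mem (HUnbhd b)).
    + intros h Hh. apply HaO. apply Hh. intros i Hi. symmetry. auto.
    + apply (D_set_prefix (a := a)); auto. intros i Hi. symmetry. auto.
Qed.

End GBase.

Section TopologicalGroup.
Variables (G : Type) (opn : (G -> Prop) -> Prop) (mul : G -> G -> G) (inv : G -> G) (e : G).
Hypothesis HT : is_topological_group opn mul inv e.

Let Htop : is_topology opn := proj1 HT.
Let HG : is_group mul inv e := proj1 (proj2 HT).

Lemma open_translate c W : opn W -> opn (fun y => W (mul c y)).
Proof.
  intro HW. apply (open_of_locally_open Htop). intros y Hy.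
  pose proof HT as [_ [_ [Hmul _]]].
  destruct (Hmul c y W HW Hy) as [U [V [_ [HV [Uc [Vy HUV]]]]]].
  exists V. split; [exact HV|]. split; [exact Vy|]. intros z Vz. auto.
Qed.

Lemma open_inv W : opn W -> opn (fun y => W (inv y)).
Proof.
  intro HW. apply (open_of_locally_open Htop). intros y Hy.
  pose proof HT as [_ [_ [_ Hinv]]].
  destruct (Hinv y W HW Hy) as [U [HU [Uy HUW]]].
  exists U. split; [exact HU|]. split; [exact Uy|]. intros z Uz. auto.
Qed.

Lemma open_mul_half O : opn O -> O e ->
  exists W, opn W /\ W e /\ forall a b, W a -> W b -> O (mul a b).
Proof.
  intros HO Oe. pose proof HT as [_ [_ [Hmul _]]].
  rewrite <- (mul1g HG e) in Oe.
  destruct (Hmul e e O HO Oe) as [U [V [HU [HV [Ue [Ve HUV]]]]]].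
  exists (fun x => U x /\ V x). split; [apply Htop; auto|]. split; [auto|].
  intros a b [Ua _] [_ Vb]. auto.
Qed.

Lemma nbhd1_quarter O : nbhd opn e O -> exists W, opn W /\ W e /\ symmetric_set inv W /\
  forall a b c d, W a -> W b -> W c -> W d -> O (mul (mul a b) (mul c d)).
Proof.
  intros [P [HP [Pe PO]]].
  destruct (open_mul_half HP Pe) as [W1 [HW1 [W1e HW1P]]].
  destruct (open_mul_half HW1 W1e) as [W2 [HW2 [W2e HW2W1]]].
  exists (fun g => W2 g /\ W2 (inv g)). split; [|split; [|split]].
  - apply Htop; [|apply open_inv]; assumption.
  - rewrite (invg1 HG). auto.
  - intros a [Ha Hia]. rewrite (invgK HG). auto.
  - intros a b c d [Ha _] [Hb _] [Hc _] [Hd _]. auto.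
Qed.

Lemma nbhd1_cube O : nbhd opn e O -> exists W, opn W /\ W e /\ symmetric_set inv W /\
  forall a b c, W a -> W b -> W c -> O (mul a (mul b c)).
Proof.
  intro HO. destruct (nbhd1_quarter HO) as [W [HW [We [Wsym HWO]]]].
  exists W. repeat split; auto. intros a b c Wa Wb Wc.
  pose proof (HWO a b c e Wa Wb Wc We) as H.
  rewrite (mulg1 HG), <- (mulgA HG) in H. exact H.
Qed.

Lemma symmetric_nbhd_sequence : first_countable_at opn e ->
  exists V : nat -> G -> Prop, (forall a, V 0%nat a) /\ (forall n, nbhd opn e (V n)) /\
    (forall n, symmetric_set inv (V n)) /\
    (forall n a b c, V (S n) a -> V (S n) b -> V (S n) c -> V n (mul a (mul b c))) /\
    (forall O, nbhd opn e O -> exists n, subset (V n) O).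
Proof.
  intros [B [HBnbhd HBbase]].
  destruct (choice (fun (O W : G -> Prop) => nbhd opn e O -> nbhd opn e W /\
      symmetric_set inv W /\ forall a b c, W a -> W b -> W c -> O (mul a (mul b c))))
    as [cube_root Hroot].
  { intro O. destruct (classic (nbhd opn e O)) as [HO|HO]; [|exists O; tauto].
    destruct (nbhd1_cube HO) as [W [HW [We [Wsym HWO]]]].
    exists W. intros _. split; [apply nbhd_of_open|]; auto. }
  set (V := fix V n := match n with
                       | 0%nat => fun _ : G => True
                       | S m => cube_root (fun g => V m g /\ B m g)
                       end).
  assert (HV : forall n, nbhd opn e (V n) /\ symmetric_set inv (V n)).
  { induction n as [|n [IHnbhd _]].
    - split; [apply (nbhd_of_open (x := e) (open_full Htop) I)|intros a _; exact I].
    - destruct (Hroot (fun g => V n g /\ B n g)) as [Hnbhd [Hsym _]];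
        [apply (nbhd_inter Htop); auto|].
      split; assumption. }
  assert (Hcube : forall n a b c, V (S n) a -> V (S n) b -> V (S n) c ->
                  V n (mul a (mul b c)) /\ B n (mul a (mul b c))).
  { intro n. apply (Hroot (fun g => V n g /\ B n g)), (nbhd_inter Htop); [apply HV|apply HBnbhd]. }
  exists V. split; [|split; [|split; [|split]]].
  - intro a. exact I.
  - intro n. apply HV.
  - intro n. apply HV.
  - intros n a b c Ha Hb Hc. apply Hcube; assumption.
  - intros O HO. destruct (HBbase O HO) as [n HnO]. exists (S n). intros g Hg.
    apply HnO. pose proof (Hcube n e g e (nbhd_mem (proj1 (HV _))) Hg (nbhd_mem (proj1 (HV _)))) as H.
    rewrite (mulg1 HG), (mul1g HG) in H. apply H.
Qed.

Lemma metrizable_of_first_countable : hausdorff opn -> first_countable_at opn e -> metrizable opn.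
Proof.
  intros Hsep Hfc.
  destruct (symmetric_nbhd_sequence Hfc) as [V [V0 [Vnbhd [Vsym [Vcube Vbase]]]]].
  assert (Ve : forall n, V n e) by (intro n; exact (nbhd_mem (Vnbhd n))).
  destruct (exists_chain_metric HG V0 Ve Vsym Vcube)
    as [d [d_ge0 [d_refl [d_sym [d_tri [d_small d_link]]]]]].
  exists d. repeat split; auto.
  - intro Hd. rewrite <- (mulKVg HG x y).
    replace (mul (inv x) y) with e; [symmetry; apply (mulg1 HG)|symmetry].
    apply (hausdorff_nbhd_eq Hsep). intros O HO. destruct (Vbase O HO) as [n HnO].
    apply HnO, d_small. rewrite Hd. apply half_pow_pos.
  - intros ->. apply d_refl.
  - intros HU x Ux.
    assert (HUx : nbhd opn e (fun g => U (mul x g))).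
    { apply nbhd_of_open; [apply open_translate; assumption|rewrite (mulg1 HG); exact Ux]. }
    destruct (Vbase _ HUx) as [n HnU]. exists ((/2)^n). split; [apply half_pow_pos|].
    intros y Hy. rewrite <- (mulKVg HG x y). apply HnU, d_small, Hy.
  - intro HU. apply (open_of_locally_open Htop). intros x Ux.
    destruct (HU x Ux) as [eps [Heps Hball]]. destruct (half_pow_lt Heps) as [n Hn].
    destruct (Vnbhd n) as [P [HP [Pe PV]]].
    exists (fun y => P (mul (inv x) y)). repeat split.
    + apply open_translate; assumption.
    + rewrite (mulVg HG). exact Pe.
    + intros y Py. apply Hball. pose proof (d_link x y n (PV _ Py)). lra.
Qed.

Lemma closure_subset_mul W a : opn W -> W e -> symmetric_set inv W -> closure opn W a ->
  exists u v, W u /\ W v /\ a = mul u v.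
Proof.
  intros HW We Wsym Ha.
  destruct (Ha (fun y => W (mul (inv a) y))) as [u [Hu Wu]].
  - apply open_translate; assumption.
  - rewrite (mulVg HG). exact We.
  - exists u, (inv (mul (inv a) u)). repeat split; auto.
    rewrite (invMg HG), (invgK HG), (mulKVg HG). reflexivity.
Qed.

Lemma first_countable_of_cn_network N : baire_space opn -> countable_family N ->
  cn_network_at opn e N -> first_countable_at opn e.
Proof.
  intros Hbaire [f Hf] Hcn.
  apply first_countable_at_intro with (B := fun n g =>
    exists a b, closure opn (f n) a /\ closure opn (f n) b /\ g = mul (inv a) b); [exact Htop|].
  intros O HO. destruct (nbhd1_quarter HO) as [W [HW [We [Wsym HWO]]]].
  destruct (Hcn W (nbhd_of_open HW We)) as [Q [HQ [Qe HQcov]]].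
  destruct (baire_closure_interior Htop (P := fun n => subset (f n) W) (f := f) Hbaire HQ Qe)
    as [n [P [x0 [HfW [HP [Px0 HPcl]]]]]].
  { intros z Qz. destruct (HQcov z Qz) as [S [NS [_ [SW Sz]]]].
    destruct (Hf S NS) as [n <-]. eauto. }
  exists n. split.
  - exists (fun g => P (mul x0 g)). split; [apply open_translate; assumption|].
    split; [rewrite (mulg1 HG); exact Px0|].
    intros g Pg. exists x0, (mul x0 g). repeat split; auto. rewrite (mulKg HG). reflexivity.
  - intros g [a [b [Ha [Hb ->]]]].
    destruct (closure_subset_mul HW We Wsym (closure_mono HfW Ha)) as [u [v [Wu [Wv ->]]]].
    destruct (closure_subset_mul HW We Wsym (closure_mono HfW Hb)) as [u' [v' [Wu' [Wv' ->]]]].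
    rewrite (invMg HG). auto.
Qed.

End TopologicalGroup.

Theorem mainTheorem4 (G : Type) (opn : (G -> Prop) -> Prop)
  (mul : G -> G -> G) (inv : G -> G) (e : G) :
  is_topological_group opn mul inv e ->
  hausdorff opn ->
  baire_space opn ->
  (metrizable opn <-> strong_pytkeev opn) /\
  (metrizable opn <-> countable_ck_character opn) /\
  (metrizable opn <-> countable_cn_character opn) /\
  (metrizable opn <-> has_G_base_D opn e).
Proof.
  intros HT Hsep Hbaire.
  assert (Hcn : forall N, countable_family N -> cn_network_at opn e N -> metrizable opn).
  { intros N HN HcnN. apply (metrizable_of_first_countable HT Hsep).
    exact (first_countable_of_cn_network HT Hbaire HN HcnN). }
  repeat split.
  - intros [d [d_ge0 [d_eq0 [_ [d_tri d_open]]]]]. exact (metric_strong_pytkeev d_ge0 d_eq0 d_tri d_open).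
  - intro Hsp. destruct (Hsp e) as [D [HD HpD]].
    destruct (countable_cn_of_pytkeev HD HpD) as [N [HN HcnN]]. exact (Hcn N HN HcnN).
  - intros [d [_ [d_eq0 [_ [d_tri d_open]]]]]. exact (metric_countable_ck_character d_eq0 d_tri d_open).
  - intro Hck. destruct (Hck e) as [N [HN HckN]]. exact (Hcn N HN (cn_network_of_ck_network HckN)).
  - intros [d [_ [d_eq0 [_ [d_tri d_open]]]]] x.
    destruct (metric_countable_ck_character d_eq0 d_tri d_open x) as [N [HN HckN]].
    exists N. split; [exact HN|exact (cn_network_of_ck_network HckN)].
  - intro Hcc. destruct (Hcc e) as [N [HN HcnN]]. exact (Hcn N HN HcnN).
  - intros [d [_ [d_eq0 [_ [d_tri d_open]]]]]. exact (metric_has_G_base_D d_eq0 d_tri d_open e).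
  - intro HGb. destruct (cn_network_of_G_base_D HGb) as [N [HN HcnN]]. exact (Hcn N HN HcnN).
Qed.
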